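(* Let $f\in\mathcal{F}$ and $V>0$. Then the FCC lattice $D_3$, the BCC lattice $D_3^*$ and the simple cubic lattice $\mathbb Z^3$ (each of volume $V$) are critical points of $L\mapsto E_f[L]$ among Bravais lattices of fixed volume $V$, i.e. the gradient of $(u,v,x,y,z)\mapsto E_f(u,v,x,y,z)$ vanishes at the parameters of each of these lattices.
   Context: Fix $V>0$ and set $C:=V^{2/3}2^{1/3}$. Every Bravais lattice $L\subset\mathbb R^3$ of covolume $V$ is parametrized by $(u,v,x,y,z)$ with $u,v>0$, $x,y,z\in\mathbb R$, via the basis $v_1=\sqrt C(1/\sqrt u,0,0)$, $v_2=\sqrt C(x/\sqrt u,v/\sqrt u,0)$, $v_3=\sqrt C(y/\sqrt u,vz/\sqrt u,u/(v\sqrt2))$; its quadratic form is $Q_L(m,n,p)=\frac{C}{u}\big[(m+xn+yp)^2+v^2(n+zp)^2+\frac{u^3}{2v^2}p^2\big]$. Let $\mathcal F$ be the set of $f\in C^2((0,\infty))$ such that for each $k\in\{0,1,2\}$, $|f^{(k)}(r)|=O(r^{-3/2-k-\eta_k})$ as $r\to\infty$ for some $\eta_k>0$. For $f\in\mathcal F$, $E_f[L]=E_f(u,v,x,y,z):=\sum_{(m,n,p)\in\mathbb Z^3\setminus\{0\}} f(Q_L(m,n,p))=\sum_{q\in L\setminus\{0\}}f(|q|^2)$, viewed as a function of the five variables $(u,v,x,y,z)$ at fixed $V$. The FCC lattice $D_3$ of volume $V$ has parameters $(u,v,x,y,z)=(1,1,0,1/2,1/2)$; the simple cubic lattice $\mathbb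 Z^3$ of volume $V$ has parameters $(2^{1/3},1,0,0,0)$; $D_3^*$ denotes the BCC lattice (the dual lattice of the FCC lattice) rescaled to volume $V$. Criticality/local optimality of a lattice among Bravais lattices of volume $V$ means criticality/local optimality of $E_f$ as a function of $(u,v,x,y,z)$ at its parameters. *)

From Stdlib Require Import Reals ZArith.
From Coquelicot Require Import Coquelicot.
Open Scope R_scope.

(* The class F: f in C^2((0,oo)) with |f^(k)(r)| = O(r^(-3/2-k-eta_k)) as r -> oo,
   k = 0,1,2.  Only values of f on (0,oo) matter. *)
Definition decay (g : R -> R) (k : R) : Prop :=
  exists eta : R, 0 < eta /\
  exists K R0 : R, 0 < R0 /\
    forall r : R, R0 <= r -> Rabs (g r) <= K * Rpower r (- (3/2 + k + eta)).

Definition in_class_F (f : R -> R) : Prop :=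
  exists f1 f2 : R -> R,
    (forall r : R, 0 < r ->
       is_derive f r (f1 r) /\ is_derive f1 r (f2 r) /\ continuous f2 r) /\
    decay f 0 /\ decay f1 1 /\ decay f2 2.

Definition Cst (V : R) : R := Rpower V (2/3) * Rpower 2 (1/3).

Definition QL (V u v x y z : R) (m n p : Z) : R :=
  Cst V / u *
  ((IZR m + x * IZR n + y * IZR p) ^ 2 + v ^ 2 * (IZR n + z * IZR p) ^ 2
   + u ^ 3 / (2 * v ^ 2) * IZR p ^ 2).

Definition box_sum (f : R -> R) (V u v x y z : R) (N : nat) : R :=
  let M := Z.of_nat N in
  sum_n (fun i => sum_n (fun j => sum_n (fun k =>
    let m := (Z.of_nat i - M)%Z in
    let n := (Z.of_nat j - M)%Z in
    let p := (Z.of_nat k - M)%Z in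
    if (Z.eqb m 0 && Z.eqb n 0 && Z.eqb p 0)%bool then 0
    else f (QL V u v x y z m n p)) (2 * N)) (2 * N)) (2 * N).

(* E_f(u,v,x,y,z) = sum_{(m,n,p) in Z^3 \ {0}} f(Q_L(m,n,p)), as the limit of
   the box partial sums (the series is absolutely convergent for f in F). *)
Definition Ef (f : R -> R) (V u v x y z : R) : R :=
  real (Lim_seq (box_sum f V u v x y z)).

Definition critical5 (F : R -> R -> R -> R -> R -> R) (u v x y z : R) : Prop :=
  is_derive (fun t => F t v x y z) u 0 /\
  is_derive (fun t => F u t x y z) v 0 /\
  is_derive (fun t => F u v t y z) x 0 /\
  is_derive (fun t => F u v x t z) y 0 /\
  is_derive (fun t => F u v x y t) z 0.

Definition is_critical_at (f : R -> R) (V u v x y z : R) : Prop :=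
  critical5 (Ef f V) u v x y z.

(* For f in F the lattice sum E_f = sum_{q <> 0} f(Q_L(q)) may be differentiated term by term in
   each parameter: the terms and their first two parameter derivatives are dominated by
   |q|^(-3-2 eta), which is summable over Z^3 (there are O(j^2) points with sup-norm j).  Every
   partial derivative is therefore sum_{q <> 0} f'(Q_L(q)) B(q) for a quadratic form B, a linear
   combination of the six sums S_ij = sum_{q <> 0} f'(Q_L(q)) q_i q_j.  At FCC, BCC and Z^3 the
   lattice symmetries, i.e. involutions of Z^3 preserving Q_L, relate the S_ij so that only one of
   them is free, and under these relations the five partial derivatives vanish identically. *)

From Stdlib Require Import Reals List Permutation Lia Lra FinFun Bool.
From Coquelicot Require Import Coquelicot.
Open Scope R_scope.

Definition lsum {A} (g : A -> R) (l : list A) : R :=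
  fold_right (fun a acc => g a + acc) 0 l.

Section ListSums.
Context {A : Type}.
Implicit Types (g h : A -> R) (l : list A).

Lemma lsum_app g l1 l2 : lsum g (l1 ++ l2) = lsum g l1 + lsum g l2.
Proof. induction l1 as [|a l1 IH]; simpl; [ring | rewrite IH; ring]. Qed.

Lemma lsum_ext g h l : (forall a, In a l -> g a = h a) -> lsum g l = lsum h l.
Proof.
  induction l as [|a l IH]; simpl; intros E; [reflexivity|].
  rewrite E, IH; auto.
Qed.

Lemma lsum_plus g h l : lsum (fun a => g a + h a) l = lsum g l + lsum h l.
Proof. induction l as [|a l IH]; simpl; [ring | rewrite IH; ring]. Qed.

Lemma lsum_minus g h l : lsum (fun a => g a - h a) l = lsum g l - lsum h l.
Proof. induction l as [|a l IH]; simpl; [ring | rewrite IH; ring]. Qed.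

Lemma lsum_scal (c : R) g l : lsum (fun a => c * g a) l = c * lsum g l.
Proof. induction l as [|a l IH]; simpl; [ring | rewrite IH; ring]. Qed.

Lemma lsum_le g h l : (forall a, In a l -> g a <= h a) -> lsum g l <= lsum h l.
Proof.
  induction l as [|a l IH]; simpl; intros H; [lra|].
  pose proof (H a (or_introl eq_refl)); pose proof (IH (fun b Hb => H b (or_intror Hb))).
  lra.
Qed.

Lemma lsum_nonneg g l : (forall a, 0 <= g a) -> 0 <= lsum g l.
Proof.
  intros H; induction l as [|a l IH]; simpl; [lra|].
  pose proof (H a); lra.
Qed.

Lemma Rabs_lsum_le g l : Rabs (lsum g l) <= lsum (fun a => Rabs (g a)) l.
Proof.
  induction l as [|a l IH]; simpl; [rewrite Rabs_R0; lra|].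
  pose proof (Rabs_triang (g a) (lsum g l)); lra.
Qed.

Lemma lsum_le_length g l B : (forall a, In a l -> g a <= B) -> lsum g l <= INR (length l) * B.
Proof.
  induction l as [|a l IH]; intros H; simpl lsum; [simpl; lra|].
  rewrite length_cons, S_INR.
  pose proof (H a (or_introl eq_refl)); pose proof (IH (fun b Hb => H b (or_intror Hb))).
  lra.
Qed.

Lemma lsum_perm g l l' : Permutation l l' -> lsum g l = lsum g l'.
Proof. induction 1; simpl; congruence || ring. Qed.

Lemma lsum_filter g (P : A -> bool) l :
  lsum g l = lsum g (filter P l) + lsum g (filter (fun a => negb (P a)) l).
Proof. induction l as [|a l IH]; simpl; [ring|]. destruct (P a); simpl; rewrite IH; ring. Qed.

Lemma lsum_incl g l L :
  (forall a, 0 <= g a) -> NoDup l -> incl l L -> lsum g l <= lsum g L.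
Proof.
  intros Hg Hl; revert L; induction Hl as [|a l Ha Hl IH]; intros L Hincl; simpl.
  - now apply lsum_nonneg.
  - destruct (in_split a L) as [L1 [L2 ->]]; [apply Hincl; now left|].
    rewrite (lsum_perm g (L1 ++ a :: L2) (a :: L1 ++ L2)) by (symmetry; apply Permutation_middle).
    simpl; apply Rplus_le_compat_l, IH.
    intros b Hb; specialize (Hincl b (or_intror Hb)).
    apply in_app_or in Hincl; apply in_or_app.
    destruct Hincl as [H | [<- | H]]; tauto.
Qed.

End ListSums.

Lemma lsum_map {A B} (g : B -> R) (h : A -> B) l : lsum g (map h l) = lsum (fun a => g (h a)) l.
Proof. induction l as [|a l IH]; simpl; congruence. Qed.

Lemma lsum_prod {A B} (g : A * B -> R) l l' :
  lsum g (list_prod l l') = lsum (fun a => lsum (fun b => g (a, b)) l') l.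
Proof. induction l as [|a l IH]; simpl; [reflexivity|]. now rewrite lsum_app, lsum_map, IH. Qed.

Lemma NoDup_list_prod {A B} (l : list A) (l' : list B) :
  NoDup l -> NoDup l' -> NoDup (list_prod l l').
Proof.
  intros Hl Hl'; induction Hl as [|a l Ha Hl IH]; simpl; [constructor|].
  apply NoDup_app; auto.
  - apply Injective_map_NoDup; auto. intros x y E; now inversion E.
  - intros [x y] H1 H2. apply in_map_iff in H1 as [z [Ez _]]. inversion Ez; subst.
    apply in_prod_iff in H2; tauto.
Qed.

(** * Boxes in Z^3 and the decay weight *)

Notation Z3 := (Z * Z * Z)%type.

Definition supnorm (q : Z3) : Z :=
  let '(m, n, p) := q in Z.max (Z.abs m) (Z.max (Z.abs n) (Z.abs p)).

Definition sqnorm (q : Z3) : R := let '(m, n, p) := q in IZR m ^ 2 + IZR n ^ 2 + IZR p ^ 2.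

Definition is_origin (q : Z3) : bool :=
  let '(m, n, p) := q in (Z.eqb m 0 && Z.eqb n 0 && Z.eqb p 0)%bool.

Definition zrange (N : nat) : list Z :=
  map (fun i => (Z.of_nat i - Z.of_nat N)%Z) (seq 0 (S (2 * N))).

Definition box (N : nat) : list Z3 := list_prod (list_prod (zrange N) (zrange N)) (zrange N).

Definition sum_box (N : nat) (g : Z3 -> R) : R := lsum g (box N).

Definition outside (j : nat) (l : list Z3) : list Z3 :=
  filter (fun q => negb (supnorm q <=? Z.of_nat j)%Z) l.

Lemma In_zrange a N : In a (zrange N) <-> (Z.abs a <= Z.of_nat N)%Z.
Proof.
  unfold zrange; rewrite in_map_iff; split.
  - intros [i [<- Hi]]; apply in_seq in Hi; lia.
  - intros H; exists (Z.to_nat (a + Z.of_nat N)); rewrite in_seq; lia.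
Qed.

Lemma In_box q N : In q (box N) <-> (supnorm q <= Z.of_nat N)%Z.
Proof.
  destruct q as [[m n] p]; unfold box, supnorm; rewrite !in_prod_iff, !In_zrange; lia.
Qed.

Lemma NoDup_box N : NoDup (box N).
Proof.
  assert (NoDup (zrange N)).
  { apply Injective_map_NoDup; [intros x y E; lia | apply seq_NoDup]. }
  unfold box; auto using NoDup_list_prod.
Qed.

Lemma length_box N : length (box N) = (S (2 * N) * S (2 * N) * S (2 * N))%nat.
Proof. unfold box, zrange; now rewrite !length_prod, length_map, length_seq. Qed.

Lemma In_outside j l q : In q (outside j l) <-> In q l /\ (Z.of_nat j < supnorm q)%Z.
Proof.
  unfold outside; rewrite filter_In, negb_true_iff, Z.leb_gt; reflexivity.
Qed.

Lemma lsum_exhaust g j l :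
  NoDup l -> (forall q, (supnorm q <= Z.of_nat j)%Z -> In q l) ->
  lsum g l = sum_box j g + lsum g (outside j l).
Proof.
  intros Hl Hj; rewrite (lsum_filter g (fun q => supnorm q <=? Z.of_nat j)%Z l).
  f_equal; apply lsum_perm, NoDup_Permutation; auto using NoDup_filter, NoDup_box.
  intros q; rewrite filter_In, In_box, Z.leb_le; intuition.
Qed.

Lemma sum_box_split g j k : (j <= k)%nat ->
  sum_box k g = sum_box j g + lsum g (outside j (box k)).
Proof. intros Hjk; apply lsum_exhaust; [apply NoDup_box | intros q; rewrite In_box; lia]. Qed.

Lemma lsum_const {A} (c : R) (l : list A) : lsum (fun _ => c) l = INR (length l) * c.
Proof. induction l as [|a l IH]; simpl lsum; [simpl; ring|]. rewrite length_cons, S_INR, IH; ring. Qed.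

Lemma is_origin_false q : is_origin q = false <-> (1 <= supnorm q)%Z.
Proof. destruct q as [[m n] p]; simpl. rewrite !andb_false_iff, !Z.eqb_neq. lia. Qed.

Lemma sqr_IZR_le a b : (Z.abs a <= Z.abs b)%Z -> IZR a ^ 2 <= IZR b ^ 2.
Proof. intros H. rewrite <- !(pow2_abs (IZR _)), <- !abs_IZR. apply pow_incr. split; apply IZR_le; lia. Qed.

Lemma sqnorm_supnorm q : IZR (supnorm q) ^ 2 <= sqnorm q <= 3 * IZR (supnorm q) ^ 2.
Proof.
  destruct q as [[m n] p]; simpl sqnorm; set (s := supnorm (m, n, p)).
  assert (Hm : IZR m ^ 2 <= IZR s ^ 2) by (apply sqr_IZR_le; unfold s, supnorm; lia).
  assert (Hn : IZR n ^ 2 <= IZR s ^ 2) by (apply sqr_IZR_le; unfold s, supnorm; lia).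
  assert (Hp : IZR p ^ 2 <= IZR s ^ 2) by (apply sqr_IZR_le; unfold s, supnorm; lia).
  pose proof (pow2_ge_0 (IZR m)); pose proof (pow2_ge_0 (IZR n)); pose proof (pow2_ge_0 (IZR p)).
  split; [|lra].
  assert (Hs : (Z.abs s = Z.abs m \/ Z.abs s = Z.abs n \/ Z.abs s = Z.abs p)%Z) by (unfold s, supnorm; lia).
  destruct Hs as [E | [E | E]];
    [ assert (IZR s ^ 2 <= IZR m ^ 2) | assert (IZR s ^ 2 <= IZR n ^ 2)
    | assert (IZR s ^ 2 <= IZR p ^ 2) ]; try (apply sqr_IZR_le; lia); lra.
Qed.

Definition weight (e : R) (q : Z3) : R :=
  if is_origin q then 0 else Rpower (sqnorm q) (-(3/2 + e)).

Lemma Rpower_pos x a : 0 < Rpower x a.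
Proof. apply exp_pos. Qed.

Lemma Rpower_opp_le x y a : 0 < x <= y -> 0 <= a -> Rpower y (-a) <= Rpower x (-a).
Proof.
  intros Hxy Ha; rewrite !Rpower_Ropp.
  apply Rinv_le_contravar; [apply Rpower_pos | now apply Rle_Rpower_l].
Qed.

Lemma Rpower_sqr x a : 0 < x -> Rpower (x ^ 2) a = Rpower x (2 * a).
Proof. intros Hx; now rewrite <- (Rpower_pow 2 x Hx), Rpower_mult. Qed.

Lemma Rpower_2 x : 0 < x -> Rpower x 2 = x ^ 2.
Proof. intros Hx; rewrite <- (Rpower_pow 2 x Hx); simpl INR; f_equal; ring. Qed.

Lemma sqnorm_ge_1 q : is_origin q = false -> 1 <= sqnorm q.
Proof.
  intros H; apply is_origin_false, IZR_le in H.
  pose proof (sqnorm_supnorm q); nra.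
Qed.

Lemma weight_nonneg e q : 0 <= weight e q.
Proof. unfold weight; destruct (is_origin q); [lra | left; apply Rpower_pos]. Qed.

Lemma weight_le e q k : 0 <= e -> is_origin q = false -> 0 < k <= IZR (supnorm q) ->
  weight e q <= Rpower k (-(3 + 2 * e)).
Proof.
  intros He Hq Hk; unfold weight; rewrite Hq.
  replace (-(3 + 2 * e)) with (2 * (-(3/2 + e))) by field.
  rewrite <- Rpower_sqr by lra; apply Rpower_opp_le; [|lra].
  pose proof (sqnorm_supnorm q); nra.
Qed.

Lemma shell_weight_le e j : 0 <= e ->
  lsum (weight e) (outside j (box (S j))) <= 26 * Rpower (INR (S j)) (-(1 + 2 * e)).
Proof.
  intros He; set (l := outside j (box (S j))); set (J := INR (S j)).
  assert (HJ : 1 <= J) by (apply (le_INR 1); lia).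
  assert (Hlen : INR (length l) <= 26 * J ^ 2).
  { assert (Hj : forall q, (supnorm q <= Z.of_nat j)%Z -> In q (box (S j)))
      by (intros q; rewrite In_box; lia).
    pose proof (lsum_exhaust (fun _ => 1) j _ (NoDup_box _) Hj) as E.
    unfold sum_box in E; rewrite !lsum_const, !length_box in E; fold l in E.
    unfold J; repeat rewrite ?mult_INR, ?S_INR in *; simpl in E.
    pose proof (pos_INR j); nra. }
  eapply Rle_trans; [apply (lsum_le_length _ l (Rpower J (-(3 + 2 * e))))|].
  { intros q Hq; apply In_outside in Hq as [_ Hq].
    apply weight_le; auto; [apply is_origin_false; lia|].
    split; [lra|]; unfold J; rewrite INR_IZR_INZ; apply IZR_le; lia. }
  replace (-(1 + 2 * e)) with (2 + -(3 + 2 * e)) by ring.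
  rewrite Rpower_plus, Rpower_2 by lra.
  pose proof (Rpower_pos J (-(3 + 2 * e))); nra.
Qed.

Lemma Rpower_telescope x E : 1 <= x -> 0 < E ->
  Rpower (x + 1) (-(1 + E)) <= (Rpower x (-E) - Rpower (x + 1) (-E)) / E.
Proof.
  intros Hx HE.
  destruct (MVT_gen (fun t => Rpower t (-E)) x (x + 1) (fun t => -E * Rpower t (-E - 1)))
    as [c [Hc Ec]]; rewrite ?Rmin_left, ?Rmax_right in * by lra.
  - intros t Ht; apply is_derive_Reals, derivable_pt_lim_power; lra.
  - intros t Ht; apply derivable_continuous_pt.
    exists (-E * Rpower t (-E - 1)); apply derivable_pt_lim_power; lra.
  - replace (-E - 1) with (-(1 + E)) in Ec by ring.
    pose proof (Rpower_opp_le c (x + 1) (1 + E) ltac:(lra) ltac:(lra)).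
    apply Rmult_le_reg_l with E; auto; field_simplify; nra.
Qed.

(* [13 / e = 26 / (2 e)]: a shell of sup-norm [j + 1] has at most [26 (j + 1)^2] points, and
   [Rpower_telescope] sums the shells. *)
Definition weight_tail (e : R) (j : nat) : R := 13 / e * Rpower (INR j) (-(2 * e)).

Lemma sum_box_weight_diff e j k : 0 < e -> (1 <= j)%nat -> (j <= k)%nat ->
  sum_box k (weight e) - sum_box j (weight e)
  <= 13 / e * (Rpower (INR j) (-(2 * e)) - Rpower (INR k) (-(2 * e))).
Proof.
  intros He Hj Hjk; induction Hjk as [|k Hjk IH]; [lra|].
  rewrite (sum_box_split _ k (S k)) by lia.
  assert (Hk : 1 <= INR k) by (apply (le_INR 1); lia).
  pose proof (Rpower_telescope (INR k) (2 * e) Hk ltac:(lra)) as Ht; rewrite <- S_INR in Ht.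
  assert (lsum (weight e) (outside k (box (S k)))
          <= 13 / e * (Rpower (INR k) (-(2 * e)) - Rpower (INR (S k)) (-(2 * e)))).
  { replace (13 / e * _) with (26 * ((Rpower (INR k) (-(2 * e)) - Rpower (INR (S k)) (-(2 * e))) / (2 * e)))
      by (field; lra).
    pose proof (shell_weight_le e k ltac:(lra)); lra. }
  lra.
Qed.

Lemma lsum_weight_outside e j k l : 0 < e -> (1 <= j)%nat -> NoDup l ->
  (forall q, In q l -> (supnorm q <= Z.of_nat k)%Z) ->
  lsum (weight e) (outside j l) <= weight_tail e j.
Proof.
  intros He Hj Hl Hk; set (k' := Nat.max j k).
  apply Rle_trans with (lsum (weight e) (outside j (box k'))).
  { apply lsum_incl; [apply weight_nonneg | now apply NoDup_filter |].
    intros q; rewrite !In_outside, In_box; intros [Hq Hq']; specialize (Hk q Hq); lia. }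
  pose proof (sum_box_split (weight e) j k' ltac:(lia)).
  pose proof (sum_box_weight_diff e j k' He Hj ltac:(lia)).
  pose proof (Rpower_pos (INR k') (-(2 * e))).
  assert (0 < 13 / e) by (apply Rdiv_lt_0_compat; lra).
  unfold weight_tail; nra.
Qed.

Lemma is_lim_seq_Rpower_INR a : 0 < a -> is_lim_seq (fun j => Rpower (INR j) (-a)) 0.
Proof.
  intros Ha; unfold Rpower.
  assert (Hln : is_lim_seq (fun j => ln (INR j)) p_infty).
  { apply (is_lim_comp_seq ln INR p_infty);
      [apply is_lim_ln_p | exists 0%nat; discriminate | apply is_lim_seq_INR]. }
  pose proof (is_lim_seq_scal_l _ (-a) _ Hln) as Hlin; simpl in Hlin.
  destruct Rle_dec in Hlin; [lra|].
  apply (is_lim_comp_seq exp (fun j => -a * ln (INR j)) m_infty);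
    [exact is_lim_exp_m | exists 0%nat; discriminate | exact Hlin].
Qed.

Lemma is_lim_seq_weight_tail e : 0 < e -> is_lim_seq (weight_tail e) 0.
Proof.
  intros He; unfold weight_tail.
  replace (Finite 0) with (Rbar_mult (13 / e) 0) by (simpl; f_equal; ring).
  apply is_lim_seq_scal_l, is_lim_seq_Rpower_INR; lra.
Qed.

Lemma sum_box_weight_bounded e N : 0 < e ->
  sum_box N (weight e) <= sum_box 1 (weight e) + 13 / e.
Proof.
  intros He; assert (0 < 13 / e) by (apply Rdiv_lt_0_compat; lra).
  destruct N as [|N].
  - rewrite (sum_box_split _ 0 1) by lia.
    pose proof (lsum_nonneg (weight e) (outside 0 (box 1)) (weight_nonneg e)); lra.
  - pose proof (sum_box_weight_diff e 1 (S N) He (le_n 1) ltac:(lia)) as Hd.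
    replace (Rpower (INR 1) (-(2 * e))) with 1 in Hd
      by (unfold Rpower; change (INR 1) with 1; now rewrite ln_1, Rmult_0_r, exp_0).
    pose proof (Rpower_pos (INR (S N)) (-(2 * e))); nra.
Qed.

Definition dominated (K e : R) (g : Z3 -> R) : Prop := forall q, Rabs (g q) <= K * weight e q.

Definition summable (g : Z3 -> R) : Prop := exists K e, 0 <= K /\ 0 < e /\ dominated K e g.

Definition lattice_sum (g : Z3 -> R) : R := real (Lim_seq (fun N => sum_box N g)).

Section Dominated.
Variables (g : Z3 -> R) (K e : R).
Hypotheses (HK : 0 <= K) (He : 0 < e) (Hg : dominated K e g).

Lemma Rabs_lsum_outside j k l : (1 <= j)%nat -> NoDup l ->
  (forall q, In q l -> (supnorm q <= Z.of_nat k)%Z) ->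
  Rabs (lsum g (outside j l)) <= K * weight_tail e j.
Proof.
  intros Hj Hl Hk.
  eapply Rle_trans; [apply Rabs_lsum_le|].
  eapply Rle_trans; [apply lsum_le; intros q _; apply Hg|].
  rewrite lsum_scal; apply Rmult_le_compat_l; auto.
  apply (lsum_weight_outside e j k); auto.
Qed.

Lemma sum_box_cauchy j k : (1 <= j)%nat -> (j <= k)%nat ->
  Rabs (sum_box k g - sum_box j g) <= K * weight_tail e j.
Proof.
  intros Hj Hjk; rewrite (sum_box_split g j k Hjk).
  replace (sum_box j g + _ - sum_box j g) with (lsum g (outside j (box k))) by ring.
  apply (Rabs_lsum_outside j k); [auto | apply NoDup_box | intros q; apply In_box].
Qed.

Lemma eventually_tail_lt (eps : R) : 0 < eps ->
  exists N, (1 <= N)%nat /\ forall j, (N <= j)%nat -> K * weight_tail e j < eps.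
Proof.
  intros Heps.
  pose proof (is_lim_seq_scal_l _ K _ (is_lim_seq_weight_tail e He)) as HT.
  simpl in HT; rewrite Rmult_0_r in HT.
  apply is_lim_seq_spec in HT; destruct (HT (mkposreal eps Heps)) as [N HN].
  exists (S N); split; [lia|]; intros j Hj; specialize (HN j ltac:(lia)).
  simpl in HN; rewrite Rminus_0_r in HN; eapply Rle_lt_trans; [apply Rle_abs | exact HN].
Qed.

Lemma dominated_ex_lim : ex_finite_lim_seq (fun N => sum_box N g).
Proof.
  apply ex_lim_seq_cauchy_corr; intros [eps Heps]; simpl.
  destruct (eventually_tail_lt (eps / 2)) as [N [HN1 HN]]; [lra|].
  exists N; intros n m Hn Hm.
  pose proof (sum_box_cauchy N n HN1 Hn); pose proof (sum_box_cauchy N m HN1 Hm).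
  specialize (HN N (le_n N)).
  replace (sum_box n g - sum_box m g)
    with ((sum_box n g - sum_box N g) - (sum_box m g - sum_box N g)) by ring.
  eapply Rle_lt_trans; [apply Rabs_triang | rewrite Rabs_Ropp; lra].
Qed.

End Dominated.

Lemma lattice_sum_unique g (l : R) : is_lim_seq (fun N => sum_box N g) l -> lattice_sum g = l.
Proof. intros H; unfold lattice_sum; now rewrite (is_lim_seq_unique _ _ H). Qed.

Lemma is_lim_lattice_sum g : summable g -> is_lim_seq (fun N => sum_box N g) (lattice_sum g).
Proof.
  intros (K & e & HK & He & Hg).
  destruct (dominated_ex_lim g K e HK He Hg) as [l Hl].
  now rewrite (lattice_sum_unique g l Hl).
Qed.

Lemma lattice_sum_ext g h : (forall q, g q = h q) -> lattice_sum g = lattice_sum h.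
Proof. intros E; unfold lattice_sum; f_equal; apply Lim_seq_ext; intros N; now apply lsum_ext. Qed.

Lemma summable_plus g h : summable g -> summable h -> summable (fun q => g q + h q).
Proof.
  intros (K & e & HK & He & Hg) (K' & e' & HK' & He' & Hh).
  exists (K + K'), (Rmin e e'); repeat split; [lra | now apply Rmin_pos |]; intros q.
  assert (Hw : forall e0, Rmin e e' <= e0 -> weight e0 q <= weight (Rmin e e') q).
  { intros e0 H0; unfold weight; destruct (is_origin q) eqn:Hq; [lra|].
    apply Rle_Rpower; [now apply sqnorm_ge_1 | lra]. }
  pose proof (Hw e (Rmin_l e e')); pose proof (Hw e' (Rmin_r e e')).
  pose proof (Hg q); pose proof (Hh q); pose proof (Rabs_triang (g q) (h q)).
  pose proof (weight_nonneg e q); pose proof (weight_nonneg e' q); nra.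
Qed.

Lemma summable_scal c g : summable g -> summable (fun q => c * g q).
Proof.
  intros (K & e & HK & He & Hg); exists (Rabs c * K), e; repeat split; auto.
  - apply Rmult_le_pos; auto using Rabs_pos.
  - intros q; rewrite Rabs_mult, Rmult_assoc; apply Rmult_le_compat_l; auto using Rabs_pos.
Qed.

Lemma lattice_sum_plus g h : summable g -> summable h ->
  lattice_sum (fun q => g q + h q) = lattice_sum g + lattice_sum h.
Proof.
  intros Hg Hh; apply lattice_sum_unique.
  eapply is_lim_seq_ext; [intros N; symmetry; apply lsum_plus|].
  apply is_lim_seq_plus'; now apply is_lim_lattice_sum.
Qed.

Lemma lattice_sum_scal c g : summable g -> lattice_sum (fun q => c * g q) = c * lattice_sum g.
Proof.
  intros Hg; apply lattice_sum_unique.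
  eapply is_lim_seq_ext; [intros N; symmetry; apply lsum_scal|].
  apply (is_lim_seq_scal_l _ c (lattice_sum g)); now apply is_lim_lattice_sum.
Qed.

Lemma is_lim_lsum_exhaustion g (l : nat -> list Z3) (j : nat -> nat) :
  summable g -> (forall N, NoDup (l N)) ->
  (forall N q, (supnorm q <= Z.of_nat (j N))%Z -> In q (l N)) ->
  (forall N, exists k, forall q, In q (l N) -> (supnorm q <= Z.of_nat k)%Z) ->
  filterlim j eventually eventually ->
  is_lim_seq (fun N => lsum g (l N)) (lattice_sum g).
Proof.
  intros Hs Hl Hin Hk Hj; pose proof Hs as (K & e & HK & He & Hg).
  eapply is_lim_seq_ext;
    [intros N; symmetry; apply (lsum_exhaust g (j N) (l N) (Hl N) (Hin N))|].
  replace (Finite (lattice_sum g)) with (Rbar_plus (lattice_sum g) 0) by (simpl; f_equal; ring).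
  apply is_lim_seq_plus'; [now apply (is_lim_seq_subseq (fun N => sum_box N g)), is_lim_lattice_sum|].
  apply is_lim_seq_abs_0.
  apply is_lim_seq_le_le_loc with (fun _ => 0) (fun N => K * weight_tail e (j N));
    [| apply is_lim_seq_const |].
  - destruct (Hj (fun n => (1 <= n)%nat) (ex_intro _ 1%nat (fun n H => H))) as [N0 HN0].
    exists N0; intros N HN; split; [apply Rabs_pos|].
    destruct (Hk N) as [k Hk']; apply (Rabs_lsum_outside g K e HK He Hg _ k); auto.
  - replace (Finite 0) with (Rbar_mult K 0) by (simpl; f_equal; ring).
    apply is_lim_seq_scal_l, (is_lim_seq_subseq (weight_tail e)), is_lim_seq_weight_tail; auto.
Qed.

Lemma filterlim_div_eventually (c : nat) :
  filterlim (fun N => (N / S c)%nat) eventually eventually.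
Proof.
  intros P [N0 HN0]; exists (N0 * S c)%nat; intros N HN; apply HN0.
  apply Nat.div_le_lower_bound; lia.
Qed.

Lemma lattice_sum_involution g (sigma : Z3 -> Z3) (c : nat) :
  summable g -> (forall q, sigma (sigma q) = q) ->
  (forall q, (supnorm (sigma q) <= Z.of_nat c * supnorm q)%Z) ->
  lattice_sum (fun q => g (sigma q)) = lattice_sum g.
Proof.
  intros Hg Hinv Hbd.
  assert (Hnorm : forall q, (0 <= supnorm q)%Z) by (intros [[m n] p]; simpl; lia).
  apply lattice_sum_unique.
  eapply is_lim_seq_ext; [intros N; apply lsum_map|].
  apply (is_lim_lsum_exhaustion g _ (fun N => (N / S c)%nat)); auto using filterlim_div_eventually.
  - intros N; apply Injective_map_NoDup; [| apply NoDup_box].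
    intros q q' E; now rewrite <- (Hinv q), <- (Hinv q'), E.
  - intros N q Hq; apply in_map_iff; exists (sigma q); split; [apply Hinv|].
    apply In_box; specialize (Hbd q); specialize (Hnorm q).
    pose proof (Nat.Div0.mul_div_le N (S c)); nia.
  - intros N; exists (c * N)%nat; intros q Hq.
    apply in_map_iff in Hq as [q' [<- Hq']]; apply In_box in Hq'.
    specialize (Hbd q'); specialize (Hnorm q'); nia.
Qed.

(** * Differentiation under the lattice sum *)

Lemma Rpower_opp_shift x a k : 0 < x -> Rpower x (-(a + k)) * Rpower x k = Rpower x (-a).
Proof. intros Hx; rewrite <- Rpower_plus; f_equal; ring. Qed.

Lemma is_derive_of_remainder (F : R -> R) t0 D dl M : 0 < dl ->
  (forall h, Rabs h <= dl -> Rabs (F (t0 + h) - F t0 - h * D) <= M * h ^ 2) ->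
  is_derive F t0 D.
Proof.
  intros Hdl H; apply is_derive_Reals; intros eps Heps.
  set (M' := Rabs M + 1).
  assert (HM' : 0 < M') by (unfold M'; pose proof (Rabs_pos M); lra).
  assert (Hd : 0 < Rmin dl (eps / M')) by (apply Rmin_pos; auto; now apply Rdiv_lt_0_compat).
  exists (mkposreal _ Hd); intros h Hh0 Hh; simpl in Hh.
  pose proof (Rmin_l dl (eps / M')); pose proof (Rmin_r dl (eps / M')).
  assert (Hpos : 0 < Rabs h) by now apply Rabs_pos_lt.
  specialize (H h ltac:(lra)).
  replace ((F (t0 + h) - F t0) / h - D) with ((F (t0 + h) - F t0 - h * D) / h) by (field; auto).
  unfold Rdiv; rewrite Rabs_mult, Rabs_inv.
  apply Rmult_le_compat_r with (r := / Rabs h) in H; [|left; now apply Rinv_0_lt_compat].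
  replace (M * h ^ 2 * / Rabs h) with (M * Rabs h) in H by (rewrite <- (pow2_abs h); field; lra).
  assert (M * Rabs h <= M' * Rabs h) by (unfold M'; pose proof (Rle_abs M); nra).
  assert (M' * Rabs h < eps) by (apply Rmult_lt_reg_r with (/ M'); [now apply Rinv_0_lt_compat|];
                                 field_simplify; unfold Rdiv in *; lra).
  lra.
Qed.

Lemma taylor_remainder_le (g g1 g2 : R -> R) t0 dl W :
  (forall t, t0 - dl <= t <= t0 + dl -> is_derive g t (g1 t) /\ is_derive g1 t (g2 t)) ->
  (forall t, t0 - dl <= t <= t0 + dl -> Rabs (g2 t) <= W) ->
  forall h, Rabs h <= dl -> Rabs (g (t0 + h) - g t0 - h * g1 t0) <= W * h ^ 2.
Proof.
  intros Hg HW h Hh; apply Rabs_le_between in Hh.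
  assert (Hin : forall t, Rmin t0 (t0 + h) <= t <= Rmax t0 (t0 + h) -> t0 - dl <= t <= t0 + dl)
    by (intros t; unfold Rmin, Rmax; destruct Rle_dec; lra).
  destruct (MVT_gen (fun t => g t - t * g1 t0) t0 (t0 + h) (fun t => g1 t - g1 t0)) as [c [Hc Ec]].
  { intros t Ht; destruct (Hg t (Hin t ltac:(lra))) as [H1 _].
    apply (is_derive_minus g (fun t => t * g1 t0)); auto.
    auto_derive; auto; ring. }
  { intros t Ht; destruct (Hg t (Hin t Ht)) as [H1 _].
    apply derivable_continuous_pt; exists (g1 t - g1 t0); apply is_derive_Reals.
    apply (is_derive_minus g (fun t => t * g1 t0)); auto.
    auto_derive; auto; ring. }
  assert (Hct : Rabs (c - t0) <= Rabs h)
    by (revert Hc; unfold Rmin, Rmax; destruct Rle_dec; intros; apply Rabs_le_between;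
        pose proof (Rle_abs h); pose proof (Rle_abs (- h)); rewrite Rabs_Ropp in *; lra).
  assert (Hcin : forall t, Rmin t0 c <= t <= Rmax t0 c -> t0 - dl <= t <= t0 + dl)
    by (intros t; revert Hc; unfold Rmin, Rmax; do 2 destruct Rle_dec; lra).
  destruct (MVT_gen g1 t0 c g2) as [d [Hd Ed]].
  { intros t Ht; apply Hg, Hcin; lra. }
  { intros t Ht; apply derivable_continuous_pt; exists (g2 t); apply is_derive_Reals, Hg, Hcin, Ht. }
  replace (g (t0 + h) - g t0 - h * g1 t0) with (g2 d * (c - t0) * h) by (rewrite <- Ed; lra).
  rewrite !Rabs_mult, <- (pow2_abs h).
  apply Rle_trans with (W * Rabs h * Rabs h); [|right; ring].
  apply Rmult_le_compat_r; [apply Rabs_pos|].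
  apply Rmult_le_compat; auto using Rabs_pos.
Qed.

Lemma Rabs_lim_le (u : nat -> R) (l B : R) :
  is_lim_seq u l -> (forall N, Rabs (u N) <= B) -> Rabs l <= B.
Proof.
  intros Hu HB.
  apply (is_lim_seq_le _ _ (Rabs l) B HB); [apply (is_lim_seq_abs _ l Hu) | apply is_lim_seq_const].
Qed.

Lemma decay_weight_le (g : R -> R) K lam eta k r q :
  0 <= K -> 0 < lam -> 0 < eta -> 0 <= k -> is_origin q = false -> lam * sqnorm q <= r ->
  Rabs (g r) <= K * Rpower r (-(3/2 + eta + k)) ->
  Rabs (g r) * Rpower (sqnorm q) k <= K * Rpower lam (-(3/2 + eta + k)) * weight eta q.
Proof.
  intros HK Hlam Heta Hk Hq Hr Hg; pose proof (sqnorm_ge_1 q Hq) as H1.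
  set (s := 3/2 + eta) in *.
  assert (Hp : Rpower r (-(s + k)) <= Rpower lam (-(s + k)) * Rpower (sqnorm q) (-(s + k))).
  { rewrite Rpower_mult_distr by lra; apply Rpower_opp_le; [nra | unfold s; lra]. }
  unfold weight; rewrite Hq; change (3/2 + eta) with s.
  rewrite <- (Rpower_opp_shift (sqnorm q) s k) by lra.
  pose proof (Rpower_pos (sqnorm q) k); pose proof (Rpower_pos (sqnorm q) (-(s + k))).
  pose proof (Rpower_pos lam (-(s + k))); pose proof (Rpower_pos r (-(s + k))).
  apply Rmult_le_compat_r with (r := Rpower (sqnorm q) k) in Hg; [|lra].
  eapply Rle_trans; [exact Hg|].
  rewrite Rmult_assoc, (Rmult_assoc K), <- (Rmult_assoc (Rpower lam _)).
  apply Rmult_le_compat_l; [lra|]; apply Rmult_le_compat_r; lra.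
Qed.

Definition has_derivatives (f f1 f2 : R -> R) : Prop :=
  forall r, 0 < r -> is_derive f r (f1 r) /\ is_derive f1 r (f2 r).

Section DerivativeUnderSum.
Variables (f f1 f2 : R -> R) (Q Q1 Q2 : R -> Z3 -> R) (t0 dl lam c K eta : R).
Hypotheses (Hdl : 0 < dl) (Hlam : 0 < lam) (Hc : 0 <= c) (HK : 0 <= K) (Heta : 0 < eta).
Hypothesis Hf : has_derivatives f f1 f2.
Hypothesis Hdecay : forall r, lam <= r ->
  Rabs (f r) <= K * Rpower r (-(3/2 + eta)) /\
  Rabs (f1 r) <= K * Rpower r (-(3/2 + eta + 1)) /\
  Rabs (f2 r) <= K * Rpower r (-(3/2 + eta + 2)).
Hypothesis HQ : forall t q, t0 - dl <= t <= t0 + dl -> is_origin q = false ->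
  is_derive (fun s => Q s q) t (Q1 t q) /\ is_derive (fun s => Q1 s q) t (Q2 t q) /\
  lam * sqnorm q <= Q t q /\ Rabs (Q1 t q) <= c * sqnorm q /\ Rabs (Q2 t q) <= c * sqnorm q.

Lemma Q_ge_lam t q : t0 - dl <= t <= t0 + dl -> is_origin q = false -> lam <= Q t q.
Proof.
  intros Ht Hq; destruct (HQ t q Ht Hq) as (_ & _ & H & _); pose proof (sqnorm_ge_1 q Hq); nra.
Qed.

Lemma Q_lower t q : t0 - dl <= t <= t0 + dl -> is_origin q = false -> lam * sqnorm q <= Q t q.
Proof. intros Ht Hq; now destruct (HQ t q Ht Hq) as (_ & _ & H & _). Qed.

Definition summand t q := if is_origin q then 0 else f (Q t q).
Definition dsummand q := if is_origin q then 0 else f1 (Q t0 q) * Q1 t0 q.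

Lemma dominated_summand t :
  t0 - dl <= t <= t0 + dl -> dominated (K * Rpower lam (-(3/2 + eta))) eta (summand t).
Proof.
  intros Ht q; unfold summand; destruct (is_origin q) eqn:Hq.
  - rewrite Rabs_R0; unfold weight; rewrite Hq; lra.
  - pose proof (decay_weight_le f K lam eta 0 (Q t q) q HK Hlam Heta (Rle_refl 0) Hq
                  (Q_lower t q Ht Hq)) as H.
    rewrite !Rplus_0_r, Rpower_O, Rmult_1_r in H by (pose proof (sqnorm_ge_1 q Hq); lra).
    apply H, Hdecay, (Q_ge_lam t q Ht Hq).
Qed.

Lemma dominated_dsummand : dominated (K * Rpower lam (-(3/2 + eta + 1)) * c) eta dsummand.
Proof.
  assert (Ht : t0 - dl <= t0 <= t0 + dl) by lra.
  intros q; unfold dsummand; destruct (is_origin q) eqn:Hq.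
  - rewrite Rabs_R0; unfold weight; rewrite Hq; lra.
  - pose proof (decay_weight_le f1 K lam eta 1 (Q t0 q) q HK Hlam Heta ltac:(lra) Hq
                  (Q_lower t0 q Ht Hq) (proj1 (proj2 (Hdecay _ (Q_ge_lam t0 q Ht Hq))))) as H.
    rewrite Rpower_1 in H by (pose proof (sqnorm_ge_1 q Hq); lra).
    destruct (HQ t0 q Ht Hq) as (_ & _ & _ & H1 & _).
    rewrite Rabs_mult; pose proof (Rabs_pos (f1 (Q t0 q))); pose proof (weight_nonneg eta q).
    pose proof (Rpower_pos lam (-(3/2 + eta + 1))); nra.
Qed.

Let Kw := K * Rpower lam (-(3/2 + eta + 2)) * c ^ 2 + K * Rpower lam (-(3/2 + eta + 1)) * c.

Lemma summand_taylor q h : Rabs h <= dl ->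
  Rabs (summand (t0 + h) q - summand t0 q - h * dsummand q) <= Kw * weight eta q * h ^ 2.
Proof.
  intros Hh; unfold summand, dsummand; destruct (is_origin q) eqn:Hq.
  { replace (0 - 0 - h * 0) with 0 by ring; rewrite Rabs_R0; unfold weight; rewrite Hq; lra. }
  apply (taylor_remainder_le (fun t => f (Q t q)) (fun t => f1 (Q t q) * Q1 t q)
           (fun t => f2 (Q t q) * Q1 t q ^ 2 + f1 (Q t q) * Q2 t q) t0 dl); auto.
  - intros t Ht; destruct (HQ t q Ht Hq) as (D1 & D2 & _).
    destruct (Hf _ (Rlt_le_trans _ _ _ Hlam (Q_ge_lam t q Ht Hq))) as [F1 F2].
    pose proof (is_derive_comp f (fun s => Q s q) t _ _ F1 D1) as G1.
    pose proof (is_derive_comp f1 (fun s => Q s q) t _ _ F2 D1) as G2.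
    unfold scal in G1, G2; simpl in G1, G2; unfold mult in G1, G2; simpl in G1, G2.
    split; [now rewrite Rmult_comm in G1|].
    eapply is_derive_ext; [reflexivity|].
    replace (f2 (Q t q) * Q1 t q ^ 2 + f1 (Q t q) * Q2 t q)
      with (Q1 t q * f2 (Q t q) * Q1 t q + f1 (Q t q) * Q2 t q) by ring.
    now apply (Derive.is_derive_mult (fun s => f1 (Q s q)) (fun s => Q1 s q)).
  - intros t Ht; destruct (HQ t q Ht Hq) as (_ & _ & _ & H1 & H2).
    destruct (Hdecay _ (Q_ge_lam t q Ht Hq)) as (_ & G1 & G2).
    pose proof (decay_weight_le f1 K lam eta 1 _ q HK Hlam Heta ltac:(lra) Hq (Q_lower t q Ht Hq) G1) as B1.
    pose proof (decay_weight_le f2 K lam eta 2 _ q HK Hlam Heta ltac:(lra) Hq (Q_lower t q Ht Hq) G2) as B2.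
    pose proof (sqnorm_ge_1 q Hq).
    rewrite Rpower_1 in B1 by lra; rewrite Rpower_2 in B2 by lra.
    eapply Rle_trans; [apply Rabs_triang|]; rewrite !Rabs_mult, <- RPow_abs.
    assert (Rabs (Q1 t q) ^ 2 <= c ^ 2 * sqnorm q ^ 2)
      by (rewrite <- Rpow_mult_distr; apply pow_incr; split; [apply Rabs_pos | lra]).
    pose proof (Rabs_pos (f1 (Q t q))); pose proof (Rabs_pos (f2 (Q t q))).
    unfold Kw; nra.
Qed.

Theorem is_derive_lattice_sum : is_derive (fun t => lattice_sum (summand t)) t0 (lattice_sum dsummand).
Proof.
  set (W := sum_box 1 (weight eta) + 13 / eta).
  assert (HKw : 0 <= Kw).
  { pose proof (Rpower_pos lam (-(3/2 + eta + 2))); pose proof (Rpower_pos lam (-(3/2 + eta + 1))).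
    unfold Kw; apply Rplus_le_le_0_compat; repeat apply Rmult_le_pos; try apply pow2_ge_0; lra. }
  assert (Hsummand : forall t, t0 - dl <= t <= t0 + dl -> summable (summand t)).
  { intros t Ht; exists (K * Rpower lam (-(3/2 + eta))), eta; repeat split; auto using dominated_summand.
    pose proof (Rpower_pos lam (-(3/2 + eta))); apply Rmult_le_pos; lra. }
  assert (Hdsummand : summable dsummand).
  { exists (K * Rpower lam (-(3/2 + eta + 1)) * c), eta; repeat split; auto using dominated_dsummand.
    pose proof (Rpower_pos lam (-(3/2 + eta + 1))); repeat apply Rmult_le_pos; lra. }
  apply (is_derive_of_remainder _ t0 _ dl (Kw * W)); auto; intros h Hh.
  assert (Ht : t0 - dl <= t0 + h <= t0 + dl) by (apply Rabs_le_between in Hh; lra).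
  apply (Rabs_lim_le (fun N => sum_box N (summand (t0 + h)) - sum_box N (summand t0) - h * sum_box N dsummand)).
  { apply is_lim_seq_minus'; [apply is_lim_seq_minus'|apply (is_lim_seq_scal_l _ h (lattice_sum dsummand))];
      apply is_lim_lattice_sum; auto; apply Hsummand; lra. }
  intros N; unfold sum_box.
  rewrite <- lsum_scal, <- !lsum_minus.
  eapply Rle_trans; [apply Rabs_lsum_le|].
  eapply Rle_trans; [apply lsum_le; intros q _; apply (summand_taylor q h Hh)|].
  rewrite (lsum_ext _ (fun q => Kw * h ^ 2 * weight eta q)) by (intros; ring).
  rewrite lsum_scal; pose proof (sum_box_weight_bounded eta N Heta); unfold sum_box in *.
  replace (Kw * W * h ^ 2) with (Kw * h ^ 2 * W) by ring.
  apply Rmult_le_compat_l; [pose proof (pow2_ge_0 h); nra | exact H].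
Qed.

End DerivativeUnderSum.

Definition uniform_decay (f f1 f2 : R -> R) : Prop :=
  forall r0, 0 < r0 -> exists K eta, 0 <= K /\ 0 < eta /\ forall r, r0 <= r ->
    Rabs (f r) <= K * Rpower r (-(3/2 + eta)) /\
    Rabs (f1 r) <= K * Rpower r (-(3/2 + eta + 1)) /\
    Rabs (f2 r) <= K * Rpower r (-(3/2 + eta + 2)).

Lemma decay_on_half_line (g : R -> R) a eta0 K0 R0 r0 eta :
  0 < r0 -> 0 < eta <= eta0 -> 0 <= a ->
  (forall r, R0 <= r -> Rabs (g r) <= K0 * Rpower r (-(a + eta0))) ->
  (forall r, 0 < r -> continuity_pt g r) ->
  exists K, 0 <= K /\ forall r, r0 <= r -> Rabs (g r) <= K * Rpower r (-(a + eta)).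
Proof.
  intros Hr0 He Ha Hg Hc; set (R1 := Rmax 1 (Rmax R0 r0)).
  assert (HR1 : 1 <= R1 /\ R0 <= R1 /\ r0 <= R1)
    by (unfold R1; repeat split; eauto using Rmax_l, Rmax_r, Rle_trans).
  assert (Hca : forall r, r0 <= r <= R1 -> continuity_pt (fun r => Rabs (g r)) r)
    by (intros r Hr; apply (continuity_pt_comp g Rabs); [apply Hc; lra | apply Rcontinuity_abs]).
  destruct (continuity_ab_maj _ r0 R1 ltac:(lra) Hca) as [rM [HM _]].
  set (M := Rabs (g rM)).
  exists (Rabs K0 + M * Rpower R1 (a + eta)).
  pose proof (Rabs_pos K0); pose proof (Rabs_pos (g rM)); pose proof (Rpower_pos R1 (a + eta)).
  split; [unfold M; nra|]; intros r Hr.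
  pose proof (Rpower_pos r (-(a + eta))).
  assert (0 <= M * Rpower R1 (a + eta) * Rpower r (-(a + eta))) by (unfold M; repeat apply Rmult_le_pos; lra).
  rewrite Rmult_plus_distr_r.
  destruct (Rle_dec R1 r).
  - enough (Rabs (g r) <= Rabs K0 * Rpower r (-(a + eta))) by lra.
    eapply Rle_trans; [apply Hg; lra|].
    apply Rle_trans with (Rabs K0 * Rpower r (-(a + eta0))).
    + apply Rmult_le_compat_r; [left; apply Rpower_pos | apply Rle_abs].
    + apply Rmult_le_compat_l; [lra | apply Rle_Rpower; lra].
  - assert (Rabs (g r) <= M) by (apply HM; lra).
    assert (1 <= Rpower R1 (a + eta) * Rpower r (-(a + eta))).
    { rewrite <- (Rpower_O R1), <- (Rplus_opp_r (a + eta)), Rpower_plus by lra.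
      apply Rmult_le_compat_l; [lra|]; apply Rpower_opp_le; lra. }
    assert (0 <= Rabs K0 * Rpower r (-(a + eta))) by (apply Rmult_le_pos; lra).
    unfold M in *; nra.
Qed.

Lemma in_class_F_uniform_decay f : in_class_F f ->
  exists f1 f2, has_derivatives f f1 f2 /\
                uniform_decay f f1 f2.
Proof.
  intros (f1 & f2 & Hd & (e0 & He0 & K0 & R0 & _ & H0) & (e1 & He1 & K1 & R1 & _ & H1)
          & (e2 & He2 & K2 & R2 & _ & H2)).
  exists f1, f2; split; [intros r Hr; destruct (Hd r Hr) as (? & ? & _); auto|].
  intros r0 Hr0; set (eta := Rmin e0 (Rmin e1 e2)).
  assert (Heta : 0 < eta /\ eta <= e0 /\ eta <= e1 /\ eta <= e2).
  { unfold eta; pose proof (Rmin_l e0 (Rmin e1 e2)); pose proof (Rmin_r e0 (Rmin e1 e2)).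
    pose proof (Rmin_l e1 e2); pose proof (Rmin_r e1 e2).
    repeat split; try lra; repeat apply Rmin_pos; auto. }
  assert (Hcont : forall (g g' : R -> R), (forall r, 0 < r -> is_derive g r (g' r)) ->
                  forall r, 0 < r -> continuity_pt g r)
    by (intros g g' Hg r Hr; apply derivable_continuous_pt; exists (g' r); now apply is_derive_Reals, Hg).
  destruct (decay_on_half_line f (3/2 + 0) e0 K0 R0 r0 eta) as [A0 [HA0 B0]]; auto; try lra.
  { apply (Hcont f f1); intros r Hr; now destruct (Hd r Hr). }
  destruct (decay_on_half_line f1 (3/2 + 1) e1 K1 R1 r0 eta) as [A1 [HA1 B1]]; auto; try lra.
  { apply (Hcont f1 f2); intros r Hr; now destruct (Hd r Hr) as (_ & ? & _). }
  destruct (decay_on_half_line f2 (3/2 + 2) e2 K2 R2 r0 eta) as [A2 [HA2 B2]]; auto; try lra.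
  { intros r Hr; apply continuity_pt_filterlim; now destruct (Hd r Hr) as (_ & _ & ?). }
  exists (A0 + A1 + A2), eta; split; [lra|]; split; [lra|]; intros r Hr.
  specialize (B0 r Hr); specialize (B1 r Hr); specialize (B2 r Hr).
  replace (3/2 + 0 + eta) with (3/2 + eta) in B0 by ring.
  replace (3/2 + 1 + eta) with (3/2 + eta + 1) in B1 by ring.
  replace (3/2 + 2 + eta) with (3/2 + eta + 2) in B2 by ring.
  pose proof (Rpower_pos r (-(3/2 + eta))); pose proof (Rpower_pos r (-(3/2 + eta + 1))).
  pose proof (Rpower_pos r (-(3/2 + eta + 2))).
  repeat split; nra.
Qed.

Record qcoef := QCoef { c_mm : R; c_nn : R; c_pp : R; c_mn : R; c_mp : R; c_np : R }.

Definition qform (a : qcoef) (q : Z3) : R :=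
  let '(m, n, p) := q in
  c_mm a * IZR m ^ 2 + c_nn a * IZR n ^ 2 + c_pp a * IZR p ^ 2
  + c_mn a * (IZR m * IZR n) + c_mp a * (IZR m * IZR p) + c_np a * (IZR n * IZR p).

Definition qnorm (a : qcoef) : R :=
  Rabs (c_mm a) + Rabs (c_nn a) + Rabs (c_pp a) + Rabs (c_mn a) + Rabs (c_mp a) + Rabs (c_np a).

Lemma qnorm_nonneg a : 0 <= qnorm a.
Proof.
  unfold qnorm; pose proof (Rabs_pos (c_mm a)); pose proof (Rabs_pos (c_nn a)).
  pose proof (Rabs_pos (c_pp a)); pose proof (Rabs_pos (c_mn a)).
  pose proof (Rabs_pos (c_mp a)); pose proof (Rabs_pos (c_np a)); lra.
Qed.

Lemma Rabs_qform_le a q : Rabs (qform a q) <= qnorm a * sqnorm q.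
Proof.
  destruct q as [[m n] p]; unfold qform, qnorm, sqnorm.
  set (M := IZR m); set (N := IZR n); set (P := IZR p); set (r := M ^ 2 + N ^ 2 + P ^ 2).
  assert (Hterm : forall c X, Rabs X <= r -> - (Rabs c * r) <= c * X <= Rabs c * r).
  { intros c X HX; apply Rabs_le_between; rewrite Rabs_mult.
    apply Rmult_le_compat_l; auto using Rabs_pos. }
  assert (Hprod : forall x y, Rabs (x * y) <= x ^ 2 + y ^ 2).
  { intros x y; rewrite Rabs_mult, <- (pow2_abs x), <- (pow2_abs y).
    pose proof (pow2_ge_0 (Rabs x - Rabs y)); nra. }
  pose proof (pow2_ge_0 M); pose proof (pow2_ge_0 N); pose proof (pow2_ge_0 P).
  pose proof (Hterm (c_mm a) (M ^ 2) ltac:(rewrite Rabs_pos_eq; unfold r; lra)).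
  pose proof (Hterm (c_nn a) (N ^ 2) ltac:(rewrite Rabs_pos_eq; unfold r; lra)).
  pose proof (Hterm (c_pp a) (P ^ 2) ltac:(rewrite Rabs_pos_eq; unfold r; lra)).
  pose proof (Hterm (c_mn a) (M * N) ltac:(pose proof (Hprod M N); unfold r; lra)).
  pose proof (Hterm (c_mp a) (M * P) ltac:(pose proof (Hprod M P); unfold r; lra)).
  pose proof (Hterm (c_np a) (N * P) ltac:(pose proof (Hprod N P); unfold r; lra)).
  apply Rabs_le_between; lra.
Qed.

Definition is_derive_qcoef (a a' : R -> qcoef) (t : R) : Prop :=
  is_derive (fun s => c_mm (a s)) t (c_mm (a' t)) /\ is_derive (fun s => c_nn (a s)) t (c_nn (a' t)) /\
  is_derive (fun s => c_pp (a s)) t (c_pp (a' t)) /\ is_derive (fun s => c_mn (a s)) t (c_mn (a' t)) /\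
  is_derive (fun s => c_mp (a s)) t (c_mp (a' t)) /\ is_derive (fun s => c_np (a s)) t (c_np (a' t)).

Definition continuous_qcoef (a : R -> qcoef) (t : R) : Prop :=
  continuous (fun s => c_mm (a s)) t /\ continuous (fun s => c_nn (a s)) t /\
  continuous (fun s => c_pp (a s)) t /\ continuous (fun s => c_mn (a s)) t /\
  continuous (fun s => c_mp (a s)) t /\ continuous (fun s => c_np (a s)) t.

Lemma ex_derive_continuous_R (g : R -> R) t : ex_derive g t -> continuous g t.
Proof. exact (@ex_derive_continuous R_AbsRing R_NormedModule g t). Qed.

Lemma is_derive_continuous (g : R -> R) t l : is_derive g t l -> continuous g t.
Proof. intros H; apply ex_derive_continuous_R; now exists l. Qed.

Lemma is_derive_qcoef_intro (a a' : R -> qcoef) t :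
  is_derive (fun s => c_mm (a s)) t (c_mm (a' t)) -> is_derive (fun s => c_nn (a s)) t (c_nn (a' t)) ->
  is_derive (fun s => c_pp (a s)) t (c_pp (a' t)) -> is_derive (fun s => c_mn (a s)) t (c_mn (a' t)) ->
  is_derive (fun s => c_mp (a s)) t (c_mp (a' t)) -> is_derive (fun s => c_np (a s)) t (c_np (a' t)) ->
  is_derive_qcoef a a' t.
Proof. unfold is_derive_qcoef; tauto. Qed.

Lemma continuous_qcoef_intro (a : R -> qcoef) t :
  ex_derive (fun s => c_mm (a s)) t -> ex_derive (fun s => c_nn (a s)) t ->
  ex_derive (fun s => c_pp (a s)) t -> ex_derive (fun s => c_mn (a s)) t ->
  ex_derive (fun s => c_mp (a s)) t -> ex_derive (fun s => c_np (a s)) t ->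
  continuous_qcoef a t.
Proof. intros; repeat split; now apply ex_derive_continuous_R. Qed.

Lemma is_derive_qform a a' t q : is_derive_qcoef a a' t ->
  is_derive (fun s => qform (a s) q) t (qform (a' t) q).
Proof.
  assert (Hscal : forall (g : R -> R) dg k, is_derive g t dg -> is_derive (fun s => g s * k) t (dg * k)).
  { intros g dg k H; eapply is_derive_ext; [intros; apply Rmult_comm|].
    rewrite Rmult_comm; now apply is_derive_scal. }
  destruct q as [[m n] p]; intros (D1 & D2 & D3 & D4 & D5 & D6); unfold qform.
  repeat apply (@is_derive_plus R_AbsRing R_NormedModule); now apply Hscal.
Qed.

Lemma qnorm_bounded (a : R -> qcoef) lo hi : lo <= hi ->
  (forall t, lo <= t <= hi -> continuous_qcoef a t) ->
  exists c, 0 <= c /\ forall t, lo <= t <= hi -> qnorm (a t) <= c.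
Proof.
  intros Hlh Ha.
  assert (Hc : forall t, lo <= t <= hi -> continuity_pt (fun s => qnorm (a s)) t).
  { assert (Hplus : forall (f g : R -> R) x, continuous f x -> continuous g x ->
                    continuous (fun y => f y + g y) x)
      by (intros f g x Hf Hg; exact (continuous_plus f g x Hf Hg)).
    intros t Ht; apply continuity_pt_filterlim; destruct (Ha t Ht) as (C1 & C2 & C3 & C4 & C5 & C6).
    change (continuous (fun s => qnorm (a s)) t); unfold qnorm.
    repeat apply Hplus; now apply continuous_Rabs_comp. }
  destruct (continuity_ab_maj _ lo hi Hlh Hc) as [tM [HM _]].
  exists (qnorm (a tM)); split; [apply qnorm_nonneg | exact HM].
Qed.

Lemma is_derive_qcoef_continuous a a' t : is_derive_qcoef a a' t -> continuous_qcoef a t.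
Proof.
  intros (D1 & D2 & D3 & D4 & D5 & D6); repeat split; eapply is_derive_continuous; eassumption.
Qed.

Definition qsum_term (g : R -> R) (a b : qcoef) (q : Z3) : R :=
  if is_origin q then 0 else g (qform a q) * qform b q.

Definition qsum (g : R -> R) (a b : qcoef) : R := lattice_sum (qsum_term g a b).

Lemma is_derive_lattice_sum_qform f f1 f2 (a a1 a2 : R -> qcoef) t0 dl lam :
  has_derivatives f f1 f2 -> uniform_decay f f1 f2 ->
  0 < dl -> 0 < lam ->
  (forall t, t0 - dl <= t <= t0 + dl ->
     is_derive_qcoef a a1 t /\ is_derive_qcoef a1 a2 t /\ continuous_qcoef a2 t /\
     forall q, is_origin q = false -> lam * sqnorm q <= qform (a t) q) ->
  is_derive (fun t => lattice_sum (fun q => if is_origin q then 0 else f (qform (a t) q))) t0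
            (qsum f1 (a t0) (a1 t0)).
Proof.
  intros Hf Hdec Hdl Hlam Ha.
  destruct (Hdec lam Hlam) as (K & eta & HK & Heta & Hb).
  destruct (qnorm_bounded a1 (t0 - dl) (t0 + dl)) as (c1 & Hc1 & Hb1); [lra| |].
  { intros t Ht; apply is_derive_qcoef_continuous with a2, Ha, Ht. }
  destruct (qnorm_bounded a2 (t0 - dl) (t0 + dl)) as (c2 & Hc2 & Hb2); [lra | apply Ha |].
  apply (is_derive_lattice_sum f f1 f2 (fun t => qform (a t)) (fun t => qform (a1 t))
           (fun t => qform (a2 t)) t0 dl lam (Rmax c1 c2) K eta); auto.
  - apply (Rle_trans _ c1); auto using Rmax_l.
  - intros t q Ht Hq; destruct (Ha t Ht) as (D1 & D2 & _ & Hlow).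
    pose proof (sqnorm_ge_1 q Hq); pose proof (Rmax_l c1 c2); pose proof (Rmax_r c1 c2).
    pose proof (Hb1 t Ht); pose proof (Hb2 t Ht).
    split; [now apply is_derive_qform|]; split; [now apply is_derive_qform|].
    split; [now apply Hlow|].
    split; (eapply Rle_trans; [apply Rabs_qform_le | apply Rmult_le_compat_r; lra]).
Qed.

Definition QL_coef (V u v x y z : R) : qcoef :=
  let k := Cst V / u in
  QCoef k (k * (x ^ 2 + v ^ 2)) (k * (y ^ 2 + v ^ 2 * z ^ 2 + u ^ 3 / (2 * v ^ 2)))
        (k * (2 * x)) (k * (2 * y)) (k * (2 * x * y + 2 * v ^ 2 * z)).

Lemma QL_qform V u v x y z m n p : QL V u v x y z m n p = qform (QL_coef V u v x y z) (m, n, p).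
Proof. unfold QL, qform, QL_coef; simpl; ring. Qed.

Lemma sum_n_lsum (a : nat -> R) n : sum_n a n = lsum a (seq 0 (S n)).
Proof.
  induction n as [|n IH]; [rewrite sum_O; simpl; ring|].
  rewrite sum_Sn, IH, (seq_S (S n) 0), lsum_app; simpl; unfold plus; simpl; ring.
Qed.

Lemma Ef_lattice_sum f V u v x y z :
  Ef f V u v x y z
  = lattice_sum (fun q => if is_origin q then 0 else f (qform (QL_coef V u v x y z) q)).
Proof.
  unfold Ef, lattice_sum; f_equal; apply Lim_seq_ext; intros N.
  unfold box_sum, sum_box, box, zrange; rewrite sum_n_lsum, !lsum_prod, lsum_map.
  apply lsum_ext; intros i _; rewrite sum_n_lsum, lsum_map.
  apply lsum_ext; intros j _; rewrite sum_n_lsum, lsum_map.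
  apply lsum_ext; intros k _; simpl is_origin; now rewrite QL_qform.
Qed.

Definition in_region (u v x y z : R) : Prop :=
  1/2 <= u <= 2 /\ 1/2 <= v <= 2 /\ -1 <= x <= 1 /\ -1 <= y <= 1 /\ -1 <= z <= 1.

Lemma sqr_plus_le a b : (a + b) ^ 2 <= 2 * (a ^ 2 + b ^ 2).
Proof. pose proof (pow2_ge_0 (a - b)); nra. Qed.

Lemma sqr_plus3_le a b c : (a + b + c) ^ 2 <= 3 * (a ^ 2 + b ^ 2 + c ^ 2).
Proof. pose proof (pow2_ge_0 (a - b)); pose proof (pow2_ge_0 (b - c)); pose proof (pow2_ge_0 (a - c)); nra. Qed.

Lemma sqr_scal_le x N : -1 <= x <= 1 -> (x * N) ^ 2 <= N ^ 2.
Proof.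
  intros Hx; assert (x ^ 2 <= 1) by nra; pose proof (pow2_ge_0 N).
  replace ((x * N) ^ 2) with (x ^ 2 * N ^ 2) by ring; nra.
Qed.

Lemma sqnorm_le_shear x y z M N P : -1 <= x <= 1 -> -1 <= y <= 1 -> -1 <= z <= 1 ->
  M ^ 2 + N ^ 2 + P ^ 2 <= 12 * ((M + x * N + y * P) ^ 2 + (N + z * P) ^ 2 + P ^ 2).
Proof.
  intros Hx Hy Hz; set (A := M + x * N + y * P); set (B := N + z * P).
  assert (HN : N ^ 2 <= 2 * B ^ 2 + 2 * P ^ 2).
  { replace N with (B + (- z) * P) by (unfold B; ring).
    pose proof (sqr_plus_le B (- z * P)); pose proof (sqr_scal_le (- z) P ltac:(lra)); lra. }
  assert (HM : M ^ 2 <= 3 * A ^ 2 + 3 * N ^ 2 + 3 * P ^ 2).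
  { replace M with (A + (- x) * N + (- y) * P) by (unfold A; ring).
    pose proof (sqr_plus3_le A (- x * N) (- y * P)).
    pose proof (sqr_scal_le (- x) N ltac:(lra)); pose proof (sqr_scal_le (- y) P ltac:(lra)); lra. }
  pose proof (pow2_ge_0 A); pose proof (pow2_ge_0 B); pose proof (pow2_ge_0 P); lra.
Qed.

Lemma Cst_pos V : 0 < Cst V.
Proof. unfold Cst; apply Rmult_lt_0_compat; apply Rpower_pos. Qed.

(* [1536 = 2 * 64 * 12]: [1 / u >= 1 / 2], weights [>= 1 / 64] on the three squares, and
   [sqnorm_le_shear]. *)
Lemma QL_coef_lower V u v x y z q : in_region u v x y z ->
  Cst V / 1536 * sqnorm q <= qform (QL_coef V u v x y z) q.
Proof.
  intros (Hu & Hv & Hx & Hy & Hz); destruct q as [[m n] p]; rewrite <- QL_qform; unfold QL, sqnorm.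
  set (M := IZR m); set (N := IZR n); set (P := IZR p).
  pose proof (sqnorm_le_shear x y z M N P Hx Hy Hz).
  set (A := M + x * N + y * P) in *; set (B := N + z * P) in *.
  pose proof (Cst_pos V); pose proof (pow2_ge_0 A); pose proof (pow2_ge_0 B); pose proof (pow2_ge_0 P).
  assert (Hu' : / 2 <= / u) by (apply Rinv_le_contravar; lra).
  assert (Hv2 : 1 / 4 <= v ^ 2 <= 4) by nra.
  assert (Hu3 : 1 / 8 <= u ^ 3) by (assert (1 / 4 <= u ^ 2) by nra; nra).
  assert (Hinv : / 8 <= / (2 * v ^ 2)) by (apply Rinv_le_contravar; lra).
  assert (Hp : 1 / 64 <= u ^ 3 / (2 * v ^ 2)).
  { pose proof (Rinv_0_lt_compat 8 ltac:(lra)).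
    replace (1 / 64) with (1 / 8 * / 8) by field; apply Rmult_le_compat; lra. }
  assert (Hin : (A ^ 2 + B ^ 2 + P ^ 2) / 64 <= A ^ 2 + v ^ 2 * B ^ 2 + u ^ 3 / (2 * v ^ 2) * P ^ 2)
    by nra.
  apply Rle_trans with (Cst V * (/ 2 * ((A ^ 2 + B ^ 2 + P ^ 2) / 64))).
  - replace (Cst V / 1536 * (M ^ 2 + N ^ 2 + P ^ 2)) with (Cst V * ((M ^ 2 + N ^ 2 + P ^ 2) / 1536))
      by (unfold Rdiv; ring).
    apply Rmult_le_compat_l; lra.
  - unfold Rdiv at 2; rewrite Rmult_assoc; apply Rmult_le_compat_l; [lra|].
    apply Rmult_le_compat; lra.
Qed.

(* The [u ^ 3] terms are kept unsimplified so that the value of [u ^ 3] at a lattice can be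
   substituted. *)
Definition QL_coef_du (V u v x y z : R) : qcoef :=
  let k := - (Cst V / u ^ 2) in
  QCoef k (k * (x ^ 2 + v ^ 2)) (k * (y ^ 2 + v ^ 2 * z ^ 2 - u ^ 3 / v ^ 2))
        (k * (2 * x)) (k * (2 * y)) (k * (2 * x * y + 2 * v ^ 2 * z)).

Definition QL_coef_dv (V u v x y z : R) : qcoef :=
  let k := Cst V / u in QCoef 0 (k * (2 * v)) (k * (2 * v * z ^ 2 - u ^ 3 / v ^ 3)) 0 0 (k * (4 * v * z)).

Definition QL_coef_dx (V u v x y z : R) : qcoef :=
  let k := Cst V / u in QCoef 0 (k * (2 * x)) 0 (k * 2) 0 (k * (2 * y)).

Definition QL_coef_dy (V u v x y z : R) : qcoef :=
  let k := Cst V / u in QCoef 0 0 (k * (2 * y)) 0 (k * 2) (k * (2 * x)).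

Definition QL_coef_dz (V u v x y z : R) : qcoef :=
  let k := Cst V / u in QCoef 0 0 (k * (2 * v ^ 2 * z)) 0 0 (k * (2 * v ^ 2)).

Definition in_core (u v x y z : R) : Prop :=
  3/4 <= u <= 7/4 /\ 3/4 <= v <= 7/4 /\ -3/4 <= x <= 3/4 /\ -3/4 <= y <= 3/4 /\ -3/4 <= z <= 3/4.

Ltac coef_derive :=
  cbv beta iota zeta delta [QL_coef QL_coef_du QL_coef_dv QL_coef_dx QL_coef_dy QL_coef_dz
                            c_mm c_nn c_pp c_mn c_mp c_np];
  auto_derive; repeat split; try (field; repeat split);
  repeat apply Rmult_integral_contrapositive_currified; try apply pow_nonzero; lra.

Section PartialDerivatives.
Variables (f f1 f2 : R -> R) (V u v x y z : R).
Hypothesis Hf : has_derivatives f f1 f2.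
Hypothesis Hdecay : uniform_decay f f1 f2.
Hypothesis Hcore : in_core u v x y z.

Tactic Notation "partial_derivative" uconstr(a) uconstr(a1) uconstr(a2) constr(t0) :=
  destruct Hcore as (Hu & Hv & Hx & Hy & Hz);
  eapply is_derive_ext; [intros t; symmetry; apply Ef_lattice_sum|];
  apply (is_derive_lattice_sum_qform f f1 f2 a a1 a2 t0 (1/4) (Cst V / 1536));
    [auto | auto | lra | pose proof (Cst_pos V); lra |];
  intros t Ht; split; [|split; [|split]];
    [ apply is_derive_qcoef_intro; coef_derive
    | apply is_derive_qcoef_intro; coef_derive
    | apply continuous_qcoef_intro; coef_derive
    | intros q _; apply QL_coef_lower; unfold in_region; lra ].

Lemma Ef_is_derive_u :
  is_derive (fun t => Ef f V t v x y z) u (qsum f1 (QL_coef V u v x y z) (QL_coef_du V u v x y z)).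
Proof.
  partial_derivative (fun t => QL_coef V t v x y z) (fun t => QL_coef_du V t v x y z)
    (fun t => let k := 2 * Cst V / t ^ 3 in
       QCoef k (k * (x ^ 2 + v ^ 2)) (k * (y ^ 2 + v ^ 2 * z ^ 2 + t ^ 3 / (2 * v ^ 2)))
             (k * (2 * x)) (k * (2 * y)) (k * (2 * x * y + 2 * v ^ 2 * z))) u.
Qed.

Lemma Ef_is_derive_v :
  is_derive (fun t => Ef f V u t x y z) v (qsum f1 (QL_coef V u v x y z) (QL_coef_dv V u v x y z)).
Proof.
  partial_derivative (fun t => QL_coef V u t x y z) (fun t => QL_coef_dv V u t x y z)
    (fun t => let k := Cst V / u in
       QCoef 0 (k * 2) (k * (2 * z ^ 2 + 3 * u ^ 3 / t ^ 4)) 0 0 (k * (4 * z))) v.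
Qed.

Lemma Ef_is_derive_x :
  is_derive (fun t => Ef f V u v t y z) x (qsum f1 (QL_coef V u v x y z) (QL_coef_dx V u v x y z)).
Proof.
  partial_derivative (fun t => QL_coef V u v t y z) (fun t => QL_coef_dx V u v t y z)
    (fun t => QCoef 0 (Cst V / u * 2) 0 0 0 0) x.
Qed.

Lemma Ef_is_derive_y :
  is_derive (fun t => Ef f V u v x t z) y (qsum f1 (QL_coef V u v x y z) (QL_coef_dy V u v x y z)).
Proof.
  partial_derivative (fun t => QL_coef V u v x t z) (fun t => QL_coef_dy V u v x t z)
    (fun t => QCoef 0 0 (Cst V / u * 2) 0 0 0) y.
Qed.

Lemma Ef_is_derive_z :
  is_derive (fun t => Ef f V u v x y t) z (qsum f1 (QL_coef V u v x y z) (QL_coef_dz V u v x y z)).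
Proof.
  partial_derivative (fun t => QL_coef V u v x y t) (fun t => QL_coef_dz V u v x y t)
    (fun t => QCoef 0 0 (Cst V / u * (2 * v ^ 2)) 0 0 0) z.
Qed.

Lemma critical_of_qsums :
  qsum f1 (QL_coef V u v x y z) (QL_coef_du V u v x y z) = 0 ->
  qsum f1 (QL_coef V u v x y z) (QL_coef_dv V u v x y z) = 0 ->
  qsum f1 (QL_coef V u v x y z) (QL_coef_dx V u v x y z) = 0 ->
  qsum f1 (QL_coef V u v x y z) (QL_coef_dy V u v x y z) = 0 ->
  qsum f1 (QL_coef V u v x y z) (QL_coef_dz V u v x y z) = 0 ->
  is_critical_at f V u v x y z.
Proof.
  intros Du Dv Dx Dy Dz; unfold is_critical_at, critical5.
  rewrite <- Du at 1; rewrite <- Dv at 1; rewrite <- Dx at 1; rewrite <- Dy at 1; rewrite <- Dz at 1.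
  auto using Ef_is_derive_u, Ef_is_derive_v, Ef_is_derive_x, Ef_is_derive_y, Ef_is_derive_z.
Qed.

End PartialDerivatives.

(** * Lattice symmetries *)

Lemma is_origin_true q : is_origin q = true <-> supnorm q = 0%Z.
Proof. destruct q as [[m n] p]; simpl. rewrite !andb_true_iff, !Z.eqb_eq. lia. Qed.

Lemma is_origin_involution (sigma : Z3 -> Z3) (c : nat) q :
  (forall q, sigma (sigma q) = q) -> (forall q, (supnorm (sigma q) <= Z.of_nat c * supnorm q)%Z) ->
  is_origin (sigma q) = is_origin q.
Proof.
  intros Hinv Hbd.
  assert (Hnorm : forall q, (0 <= supnorm q)%Z) by (intros [[m n] p]; simpl; lia).
  assert (H0 : forall q, is_origin q = true -> is_origin (sigma q) = true).
  { intros q0 Hq0; apply is_origin_true in Hq0; apply is_origin_true.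
    specialize (Hbd q0); specialize (Hnorm (sigma q0)); rewrite Hq0 in Hbd; lia. }
  destruct (is_origin q) eqn:Hq; [now apply H0|].
  destruct (is_origin (sigma q)) eqn:Hs; [|reflexivity].
  apply H0 in Hs; rewrite Hinv in Hs; congruence.
Qed.

Section SymmetricSums.
Variables (g : R -> R) (a : qcoef) (lam K eta : R).
Hypotheses (Hlam : 0 < lam) (HK : 0 <= K) (Heta : 0 < eta).
Hypothesis Hg : forall r, lam <= r -> Rabs (g r) <= K * Rpower r (-(3/2 + eta + 1)).
Hypothesis Ha : forall q, is_origin q = false -> lam * sqnorm q <= qform a q.

Lemma summable_qsum_term b : summable (qsum_term g a b).
Proof.
  exists (K * Rpower lam (-(3/2 + eta + 1)) * qnorm b), eta.
  pose proof (Rpower_pos lam (-(3/2 + eta + 1))).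
  pose proof (qnorm_nonneg b).
  split; [repeat apply Rmult_le_pos; lra|]; split; [exact Heta|]; intros q; unfold qsum_term.
  destruct (is_origin q) eqn:Hq; [rewrite Rabs_R0; unfold weight; rewrite Hq; lra|].
  pose proof (sqnorm_ge_1 q Hq); pose proof (Ha q Hq).
  assert (Hge : lam <= qform a q) by nra.
  pose proof (decay_weight_le g K lam eta 1 (qform a q) q HK Hlam Heta ltac:(lra) Hq (Ha q Hq)
                (Hg _ Hge)) as Hdec.
  rewrite Rpower_1 in Hdec by lra.
  pose proof (Rabs_qform_le b q); pose proof (Rabs_pos (g (qform a q))); pose proof (weight_nonneg eta q).
  rewrite Rabs_mult; nra.
Qed.

Lemma qsum_expand b :
  qsum g a b = c_mm b * qsum g a (QCoef 1 0 0 0 0 0) + c_nn b * qsum g a (QCoef 0 1 0 0 0 0)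
             + c_pp b * qsum g a (QCoef 0 0 1 0 0 0) + c_mn b * qsum g a (QCoef 0 0 0 1 0 0)
             + c_mp b * qsum g a (QCoef 0 0 0 0 1 0) + c_np b * qsum g a (QCoef 0 0 0 0 0 1).
Proof.
  unfold qsum; rewrite <- !lattice_sum_scal, <- !lattice_sum_plus;
    try (repeat apply summable_plus; try apply summable_scal; apply summable_qsum_term).
  apply lattice_sum_ext; intros q; unfold qsum_term; destruct (is_origin q); [ring|].
  destruct q as [[m n] p]; simpl; ring.
Qed.

Lemma qsum_involution (sigma : Z3 -> Z3) (c : nat) b b' :
  (forall q, sigma (sigma q) = q) -> (forall q, (supnorm (sigma q) <= Z.of_nat c * supnorm q)%Z) ->
  (forall q, qform a (sigma q) = qform a q) -> (forall q, qform b (sigma q) = qform b' q) ->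
  qsum g a b = qsum g a b'.
Proof.
  intros Hinv Hbd Hsa Hsb; unfold qsum.
  rewrite <- (lattice_sum_involution _ sigma c); auto using summable_qsum_term.
  apply lattice_sum_ext; intros q; unfold qsum_term.
  now rewrite (is_origin_involution sigma c q Hinv Hbd), Hsa, Hsb.
Qed.

End SymmetricSums.

Lemma QL_qsum_hypotheses f f1 f2 V u v x y z : uniform_decay f f1 f2 -> in_region u v x y z ->
  exists lam K eta, 0 < lam /\ 0 <= K /\ 0 < eta /\
    (forall r, lam <= r -> Rabs (f1 r) <= K * Rpower r (-(3/2 + eta + 1))) /\
    (forall q, is_origin q = false -> lam * sqnorm q <= qform (QL_coef V u v x y z) q).
Proof.
  intros Hdec Hreg; assert (Hlam : 0 < Cst V / 1536) by (pose proof (Cst_pos V); lra).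
  destruct (Hdec _ Hlam) as (K & eta & HK & Heta & Hb).
  exists (Cst V / 1536), K, eta; repeat split; auto.
  - intros r Hr; apply Hb, Hr.
  - intros q _; now apply QL_coef_lower.
Qed.

(* Involutions of Z^3 preserving Q_L: [flip_m], [flip_n], [swap_mn] at (u,1,0,1/2,1/2) for every u,
   [fcc_turn] there when u^3 = 1 (FCC) and [bcc_turn] when u^3 = 1/2 (BCC); [neg_m], [neg_n],
   [swap_mp], [swap_np] at the cubic point (u,1,0,0,0), u^3 = 2. *)
Definition flip_m (q : Z3) : Z3 := let '(m, n, p) := q in ((- m - p)%Z, n, p).
Definition flip_n (q : Z3) : Z3 := let '(m, n, p) := q in (m, (- n - p)%Z, p).
Definition swap_mn (q : Z3) : Z3 := let '(m, n, p) := q in (n, m, p).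
Definition fcc_turn (q : Z3) : Z3 := let '(m, n, p) := q in ((- n)%Z, (- m)%Z, (m + n + p)%Z).
Definition bcc_turn (q : Z3) : Z3 := let '(m, n, p) := q in ((- m)%Z, (n - m)%Z, (2 * m + p)%Z).
Definition neg_m (q : Z3) : Z3 := let '(m, n, p) := q in ((- m)%Z, n, p).
Definition neg_n (q : Z3) : Z3 := let '(m, n, p) := q in (m, (- n)%Z, p).
Definition swap_mp (q : Z3) : Z3 := let '(m, n, p) := q in (p, n, m).
Definition swap_np (q : Z3) : Z3 := let '(m, n, p) := q in (m, p, n).

Ltac unfold_symmetries :=
  cbn [flip_m flip_n swap_mn fcc_turn bcc_turn neg_m neg_n swap_mp swap_np
       qform QL_coef c_mm c_nn c_pp c_mn c_mp c_np supnorm Z.of_nat Pos.of_succ_nat Pos.succ].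

Ltac involution_tac := intros [[m n] p]; unfold_symmetries; repeat f_equal; lia.
Ltac distortion_tac := intros [[m n] p]; unfold_symmetries; lia.
Ltac pullback_tac :=
  intros [[m n] p]; unfold_symmetries;
  repeat first [rewrite opp_IZR | rewrite plus_IZR | rewrite minus_IZR | rewrite mult_IZR].

Tactic Notation "basis_relation" constr(Hsym) constr(Hexp) constr(sigma) constr(b) constr(b')
  constr(Hinv) "as" ident(R) :=
  pose proof (Hsym sigma 3%nat b b' ltac:(involution_tac) ltac:(distortion_tac) Hinv
                ltac:(pullback_tac; ring)) as R;
  rewrite !Hexp in R; cbn [c_mm c_nn c_pp c_mn c_mp c_np] in R.

Lemma fcc_family_critical f f1 f2 V u0 :
  has_derivatives f f1 f2 -> uniform_decay f f1 f2 ->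
  3/4 <= u0 <= 7/4 -> u0 ^ 3 = 1 \/ u0 ^ 3 = 1/2 ->
  is_critical_at f V u0 1 0 (1/2) (1/2).
Proof.
  intros Hf Hdec Hu Hw; assert (Hu0 : u0 <> 0) by lra.
  set (a := QL_coef V u0 1 0 (1/2) (1/2)).
  destruct (QL_qsum_hypotheses f f1 f2 V u0 1 0 (1/2) (1/2)) as (lam & K & eta & Hyps);
    [auto | unfold in_region; lra |].
  pose proof (qsum_expand f1 a lam K eta) as Hexp; pose proof (qsum_involution f1 a lam K eta) as Hsym.
  fold a in Hyps; destruct Hyps as (Hlam & HK & Heta & Hg & Ha).
  specialize (Hexp Hlam HK Heta Hg Ha); specialize (Hsym Hlam HK Heta Hg Ha).
  set (Smm := qsum f1 a (QCoef 1 0 0 0 0 0)) in *; set (Snn := qsum f1 a (QCoef 0 1 0 0 0 0)) in *.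
  set (Spp := qsum f1 a (QCoef 0 0 1 0 0 0)) in *; set (Smn := qsum f1 a (QCoef 0 0 0 1 0 0)) in *.
  set (Smp := qsum f1 a (QCoef 0 0 0 0 1 0)) in *; set (Snp := qsum f1 a (QCoef 0 0 0 0 0 1)) in *.
  assert (Hm : forall q, qform a (flip_m q) = qform a q) by (unfold a; pullback_tac; field; auto).
  assert (Hn : forall q, qform a (flip_n q) = qform a q) by (unfold a; pullback_tac; field; auto).
  assert (Hmn : forall q, qform a (swap_mn q) = qform a q) by (unfold a; pullback_tac; field; auto).
  basis_relation Hsym Hexp flip_m (QCoef 0 0 0 1 0 0) (QCoef 0 0 0 (-1) 0 (-1)) Hm as R1.
  basis_relation Hsym Hexp flip_m (QCoef 0 0 0 0 1 0) (QCoef 0 0 (-1) 0 (-1) 0) Hm as R2.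
  basis_relation Hsym Hexp flip_n (QCoef 0 0 0 0 0 1) (QCoef 0 0 (-1) 0 0 (-1)) Hn as R3.
  basis_relation Hsym Hexp swap_mn (QCoef 1 0 0 0 0 0) (QCoef 0 1 0 0 0 0) Hmn as R4.
  assert (Emm : Smm = (u0 ^ 3 + 1/2) / 2 * Spp).
  { destruct Hw as [Hw | Hw].
    - assert (Ht : forall q, qform a (fcc_turn q) = qform a q)
        by (unfold a; pullback_tac; rewrite Hw; field; auto).
      basis_relation Hsym Hexp fcc_turn (QCoef 0 0 1 0 0 0) (QCoef 1 1 1 2 2 2) Ht as R5.
      rewrite Hw; lra.
    - assert (Ht : forall q, qform a (bcc_turn q) = qform a q)
        by (unfold a; pullback_tac; rewrite Hw; field; auto).
      basis_relation Hsym Hexp bcc_turn (QCoef 0 1 0 0 0 0) (QCoef 1 1 0 (-2) 0 0) Ht as R5.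
      rewrite Hw; lra. }
  assert (Hq : forall b, qsum f1 a b
    = ((c_mm b + c_nn b) * ((u0 ^ 3 + 1/2) / 2) + c_pp b + c_mn b / 4 - c_mp b / 2 - c_np b / 2) * Spp).
  { intros b; rewrite Hexp.
    replace Snn with Smm by lra; replace Smn with (Spp / 4) by lra.
    replace Smp with (- Spp / 2) by lra; replace Snp with (- Spp / 2) by lra.
    rewrite Emm; field. }
  apply (critical_of_qsums f f1 f2); auto; [unfold in_core; lra|..]; rewrite Hq;
    cbv beta zeta delta [QL_coef_du QL_coef_dv QL_coef_dx QL_coef_dy QL_coef_dz];
    cbn [c_mm c_nn c_pp c_mn c_mp c_np]; field; auto.
Qed.

Lemma cubic_critical f f1 f2 V u0 :
  has_derivatives f f1 f2 -> uniform_decay f f1 f2 ->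
  3/4 <= u0 <= 7/4 -> u0 ^ 3 = 2 ->
  is_critical_at f V u0 1 0 0 0.
Proof.
  intros Hf Hdec Hu Hw; assert (Hu0 : u0 <> 0) by lra.
  set (a := QL_coef V u0 1 0 0 0).
  destruct (QL_qsum_hypotheses f f1 f2 V u0 1 0 0 0) as (lam & K & eta & Hyps);
    [auto | unfold in_region; lra |].
  pose proof (qsum_expand f1 a lam K eta) as Hexp; pose proof (qsum_involution f1 a lam K eta) as Hsym.
  fold a in Hyps; destruct Hyps as (Hlam & HK & Heta & Hg & Ha).
  specialize (Hexp Hlam HK Heta Hg Ha); specialize (Hsym Hlam HK Heta Hg Ha).
  set (Smm := qsum f1 a (QCoef 1 0 0 0 0 0)) in *; set (Snn := qsum f1 a (QCoef 0 1 0 0 0 0)) in *.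
  set (Spp := qsum f1 a (QCoef 0 0 1 0 0 0)) in *; set (Smn := qsum f1 a (QCoef 0 0 0 1 0 0)) in *.
  set (Smp := qsum f1 a (QCoef 0 0 0 0 1 0)) in *; set (Snp := qsum f1 a (QCoef 0 0 0 0 0 1)) in *.
  assert (Hm : forall q, qform a (neg_m q) = qform a q) by (unfold a; pullback_tac; field; auto).
  assert (Hn : forall q, qform a (neg_n q) = qform a q) by (unfold a; pullback_tac; field; auto).
  assert (Hmp : forall q, qform a (swap_mp q) = qform a q)
    by (unfold a; pullback_tac; rewrite Hw; field; auto).
  assert (Hnp : forall q, qform a (swap_np q) = qform a q)
    by (unfold a; pullback_tac; rewrite Hw; field; auto).
  basis_relation Hsym Hexp neg_m (QCoef 0 0 0 1 0 0) (QCoef 0 0 0 (-1) 0 0) Hm as R1.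
  basis_relation Hsym Hexp neg_m (QCoef 0 0 0 0 1 0) (QCoef 0 0 0 0 (-1) 0) Hm as R2.
  basis_relation Hsym Hexp neg_n (QCoef 0 0 0 0 0 1) (QCoef 0 0 0 0 0 (-1)) Hn as R3.
  basis_relation Hsym Hexp swap_mp (QCoef 1 0 0 0 0 0) (QCoef 0 0 1 0 0 0) Hmp as R4.
  basis_relation Hsym Hexp swap_np (QCoef 0 1 0 0 0 0) (QCoef 0 0 1 0 0 0) Hnp as R5.
  assert (Hq : forall b, qsum f1 a b = (c_mm b + c_nn b + c_pp b) * Spp).
  { intros b; rewrite Hexp.
    replace Smm with Spp by lra; replace Snn with Spp by lra.
    replace Smn with 0 by lra; replace Smp with 0 by lra; replace Snp with 0 by lra; ring. }
  apply (critical_of_qsums f f1 f2); auto; [unfold in_core; lra|..]; rewrite Hq;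
    cbv beta zeta delta [QL_coef_du QL_coef_dv QL_coef_dx QL_coef_dy QL_coef_dz];
    cbn [c_mm c_nn c_pp c_mn c_mp c_np]; rewrite ?Hw; field; auto.
Qed.

Lemma Rpower_2_cube a : Rpower 2 a ^ 3 = Rpower 2 (3 * a).
Proof.
  rewrite <- Rpower_pow by apply Rpower_pos; rewrite Rpower_mult; f_equal; simpl; ring.
Qed.

Lemma cube_root_bounds u : 0 < u -> 1/2 <= u ^ 3 <= 2 -> 3/4 <= u <= 7/4.
Proof.
  intros Hu [H1 H2]; split; apply Rnot_lt_le; intros H.
  - assert (u * u < 9/16) by nra; nra.
  - assert (u * u > 49/16) by nra; nra.
Qed.

Theorem proposition3p2 :
  forall (f : R -> R) (V : R), in_class_F f -> 0 < V ->
    (* FCC lattice D_3 : (u,v,x,y,z) = (1,1,0,1/2,1/2) *)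
    is_critical_at f V 1 1 0 (1/2) (1/2) /\
    (* BCC lattice D_3^* : (u,v,x,y,z) = (2^(-1/3),1,0,1/2,1/2) *)
    is_critical_at f V (Rpower 2 (-1/3)) 1 0 (1/2) (1/2) /\
    (* simple cubic Z^3 : (u,v,x,y,z) = (2^(1/3),1,0,0,0) *)
    is_critical_at f V (Rpower 2 (1/3)) 1 0 0 0.
Proof.
  intros f V Hf _; destruct (in_class_F_uniform_decay f Hf) as (f1 & f2 & Hd & Hdec).
  assert (Hbcc : Rpower 2 (-1/3) ^ 3 = 1/2).
  { rewrite Rpower_2_cube; replace (3 * (-1/3)) with (Ropp 1) by field.
    rewrite Rpower_Ropp, Rpower_1; lra. }
  assert (Hsc : Rpower 2 (1/3) ^ 3 = 2).
  { rewrite Rpower_2_cube; replace (3 * (1/3)) with 1 by field; rewrite Rpower_1; lra. }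
  split; [|split].
  - apply (fcc_family_critical f f1 f2); auto; [lra | left; ring].
  - apply (fcc_family_critical f f1 f2); auto.
    apply cube_root_bounds; [apply Rpower_pos | lra].
  - apply (cubic_critical f f1 f2); auto.
    apply cube_root_bounds; [apply Rpower_pos | lra].
Qed.
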